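(* (Metatheory of the CPL sequent calculus.) Fix a set $W$ of worlds with a converse well-founded accessibility relation $\prec$. For all contexts $\Gamma,\Gamma'$, worlds $w$, and propositions $A, C$: (i) (Hypothesis / identity) If $A[w] \in \Gamma$, then $\Gamma \Rightarrow A[w]$. (ii) (Generalized weakening) If $\Gamma \subseteq_w \Gamma'$ and $\Gamma \Rightarrow A[w]$, then $\Gamma' \Rightarrow A[w]$. (iii) (Substitution / cut) If $\Gamma \Rightarrow A[w]$ and $\Gamma, A[w] \Rightarrow C[w]$, then $\Gamma \Rightarrow C[w]$.
   Context: Fix a set $W$ of worlds and a binary accessibility relation $\prec$ on $W$ that is converse well-founded: there is no infinite chain $w_0 \prec w_1 \prec w_2 \prec \cdots$ (in particular $\prec$ is irreflexive and acyclic). $\prec^*$ and $\prec^+$ denote the reflexive–transitive and transitive closures. Propositions: $A,B,C ::= Q \mid \bot \mid A \supset B \mid \Diamond A \mid \Box A$, $Q$ ranging over atomic propositions. A context $\Gamma$ is a finite collection of judgments $A[w]$ ($w\in W$). $\Gamma \subseteq_w \Gamma'$ holds iff (a) for all $w'$ with $w \prec^* w'$, $A[w'] \in \Gamma$ implies $A[w'] \in \Gamma'$, and (b) for all $w'$ with $w \prec^+ w'$, $A[w'] \in \Gamma'$ implies $A[w'] \in \Gamma$. The sequent $\Gamma \Rightarrow A[w]$ (sequent calculus for tethered constructive provability logic CPL) is defined one world at a time (provability at $w$ after provability at all $w'$ with $w \prec^+ w'$; well-defined by converse well-foundedness), as the least relation closed under: (init) $\Gamma, Q[w] \Rightarrow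 Q[w]$ for $Q$ atomic. ($\bot L$) If $\bot[w] \in \Gamma$ then $\Gamma \Rightarrow C[w]$. ($\supset R$) If $\Gamma, A[w] \Rightarrow B[w]$ then $\Gamma \Rightarrow A \supset B[w]$. ($\supset L$) If $A \supset B[w] \in \Gamma$, $\Gamma \Rightarrow A[w]$ and $\Gamma, B[w] \Rightarrow C[w]$, then $\Gamma \Rightarrow C[w]$. ($\Diamond R$) If $w \prec w'$ and $\Gamma \Rightarrow A[w']$ then $\Gamma \Rightarrow \Diamond A[w]$. ($\Box R$) If $\Gamma \Rightarrow A[w']$ for every $w'$ with $w \prec w'$, then $\Gamma \Rightarrow \Box A[w]$. ($\Diamond L$) If $\Diamond A[w] \in \Gamma$ and for every $w'$ with $w \prec w'$, $\Gamma \Rightarrow A[w']$ implies $\Gamma \Rightarrow C[w]$, then $\Gamma \Rightarrow C[w]$. ($\Box L$) If $\Box A[w] \in \Gamma$ and ($\Gamma \Rightarrow A[w']$ for all $w'$ with $w \prec w'$) implies $\Gamma \Rightarrow C[w]$, then $\Gamma \Rightarrow C[w]$. *)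

From Stdlib Require Import List Relations.
Import ListNotations.
Set Implicit Arguments.

Inductive prop (Atom : Type) : Type :=
| Atm : Atom -> prop Atom
| Bot : prop Atom
| Imp : prop Atom -> prop Atom -> prop Atom
| Dia : prop Atom -> prop Atom
| Box : prop Atom -> prop Atom.
Arguments Bot {Atom}.

(* A context is a finite collection (list) of judgments A[w]. *)
Definition ctx (Atom W : Type) := list (prop Atom * W).

Section Sequent.
Variables (Atom W : Type) (R : W -> W -> Prop).

Definition subctx (w : W) (G G' : ctx Atom W) : Prop :=
  (forall w' A, clos_refl_trans W R w w' -> In (A, w') G -> In (A, w') G') /\
  (forall w' A, clos_trans W R w w' -> In (A, w') G' -> In (A, w') G).

(* The rules at a fixed world w, given provability H at the worlds above w
   (H G A w' : "G => A[w']", only consulted for w < w'). Least relation. *)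
Inductive seq_at (H : ctx Atom W -> prop Atom -> W -> Prop) (w : W)
  : ctx Atom W -> prop Atom -> Prop :=
| s_init : forall G Q, In (Atm Q, w) G -> seq_at H w G (Atm Q)
| s_botL : forall G C, In (Bot, w) G -> seq_at H w G C
| s_impR : forall G A B, seq_at H w ((A, w) :: G) B -> seq_at H w G (Imp A B)
| s_impL : forall G A B C, In (Imp A B, w) G -> seq_at H w G A ->
    seq_at H w ((B, w) :: G) C -> seq_at H w G C
| s_diaR : forall G A w', R w w' -> H G A w' -> seq_at H w G (Dia A)
| s_boxR : forall G A, (forall w', R w w' -> H G A w') -> seq_at H w G (Box A)
| s_diaL : forall G A C, In (Dia A, w) G ->
    (forall w', R w w' -> H G A w' -> seq_at H w G C) -> seq_at H w G C
| s_boxL : forall G A C, In (Box A, w) G ->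
    ((forall w', R w w' -> H G A w') -> seq_at H w G C) -> seq_at H w G C.

Variable Hwf : well_founded (fun x y => R y x).

Definition seq_step (w : W)
  (rec : forall w', R w w' -> ctx Atom W -> prop Atom -> Prop)
  : ctx Atom W -> prop Atom -> Prop :=
  seq_at (fun G A w' => exists h : R w w', rec w' h G A) w.

Definition seq_w : W -> ctx Atom W -> prop Atom -> Prop :=
  Fix Hwf (fun _ => ctx Atom W -> prop Atom -> Prop) seq_step.

Definition sequent (G : ctx Atom W) (A : prop Atom) (w : W) : Prop := seq_w w G A.

End Sequent.

From Stdlib Require Import List Relations Wellfounded FunctionalExtensionality.
Set Implicit Arguments.
Unset Strict Implicit.

(* Weakening is by well-founded
   induction on the world and then on derivations: the modal rules only consult
   provability at strictly higher worlds, and there [subctx] survives with the two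
   contexts possibly swapped, because [R] is acyclic.  Cut is by induction on the
   cut formula and then on its derivation; when the cut formula is principal on the
   left, the hypothesis [A[w]] is eliminated from the right derivation using the
   premise of the right rule.  For [Dia] and [Box] that premise is exactly what the
   corresponding left rule asks for, so only implication needs cuts on smaller
   formulas. *)

Section Metatheory.

Variables (Atom W : Type) (R : W -> W -> Prop).
Variable Hwf : well_founded (fun x y => R y x).

Local Notation prop := (prop Atom).
Local Notation ctx := (ctx Atom W).
Local Notation prov G A w := (sequent R Hwf G A w).
Local Notation prov_at w := (seq_at R (fun G A w' => exists _ : R w w', prov G A w') w).

Lemma clos_t_rt_t x y z :
  clos_trans W R x y -> clos_refl_trans W R y z -> clos_trans W R x z.
Proof. intros Hxy Hyz; revert x Hxy; induction Hyz; eauto using t_trans, t_step. Qed.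

Lemma clos_trans_irrefl w : ~ clos_trans W R w w.
Proof.
  intro Hww; apply clos_trans_transp_permute in Hww; revert Hww.
  induction (wf_clos_trans _ _ Hwf w) as [x _ IH]; intro Hxx.
  exact (IH x Hxx Hxx).
Qed.

Lemma succ_rt_neq w w' x : R w w' -> clos_refl_trans W R w' x -> x <> w.
Proof.
  intros Hww' Hw'x ->; exact (clos_trans_irrefl (clos_t_rt_t (t_step _ _ _ _ Hww') Hw'x)).
Qed.

Lemma subctx_succ w w' (G G' : ctx) :
  subctx R w G G' -> R w w' -> subctx R w' G G'.
Proof.
  intros [Hup Hdown] Hww'; split; intros x A Hx.
  - apply Hup; eauto using rt_trans, rt_step.
  - apply Hdown; eauto using t_trans, t_step.
Qed.

Lemma subctx_succ_swap w w' (G G' : ctx) :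
  subctx R w G G' -> R w w' -> subctx R w' G' G.
Proof.
  intros [Hup Hdown] Hww'; split; intros x A Hx.
  - apply Hdown; exact (clos_t_rt_t (t_step _ _ _ _ Hww') Hx).
  - apply Hup; apply clos_t_clos_rt; eauto using t_trans, t_step.
Qed.

Lemma subctx_cons w (G G' : ctx) A :
  subctx R w G G' -> subctx R w ((A, w) :: G) ((A, w) :: G').
Proof. intros [Hup Hdown]; split; intros x B Hx [Heq | Hin]; simpl; auto. Qed.

Definition agree_off (w : W) (G G' : ctx) : Prop :=
  forall A x, x <> w -> In (A, x) G <-> In (A, x) G'.

Lemma agree_off_refl w (G : ctx) : agree_off w G G.
Proof. intros A x _; reflexivity. Qed.

Lemma agree_off_consl w (G G' : ctx) (A : prop) :
  agree_off w G G' -> agree_off w ((A, w) :: G) G'.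
Proof.
  intros Hagr B x Hx; simpl; rewrite <- (Hagr B x Hx).
  split; [intros [Heq | Hin]; [congruence | exact Hin] | auto].
Qed.

Lemma agree_off_consr w (G G' : ctx) (A : prop) :
  agree_off w G G' -> agree_off w G ((A, w) :: G').
Proof.
  intros Hagr B x Hx; symmetry; apply agree_off_consl; [|exact Hx].
  intros C y Hy; symmetry; exact (Hagr C y Hy).
Qed.

Lemma subctx_incl w (G G' : ctx) : incl G G' -> agree_off w G G' -> subctx R w G G'.
Proof.
  intros Hincl Hagr; split; intros x A Hx Hin; auto.
  apply Hagr; [|exact Hin].
  intros ->; exact (clos_trans_irrefl Hx).
Qed.

Lemma subctx_succ_agree_off w w' (G G' : ctx) :
  R w w' -> agree_off w G G' -> subctx R w' G G'.
Proof.
  intros Hww' Hagr; split; intros x A Hx; apply Hagr.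
  - exact (succ_rt_neq Hww' Hx).
  - exact (succ_rt_neq Hww' (clos_t_clos_rt _ _ _ _ Hx)).
Qed.

Lemma prov_unfold w (G : ctx) (A : prop) : prov G A w <-> prov_at w G A.
Proof.
  unfold sequent, seq_w; rewrite Fix_eq; [reflexivity|].
  intros x f g Hfg; replace g with f; [reflexivity|].
  do 2 (apply functional_extensionality_dep; intro); apply Hfg.
Qed.

Lemma prov_weaken w (G G' : ctx) (A : prop) : subctx R w G G' -> prov G A w -> prov G' A w.
Proof.
  revert G G' A; induction w as [w IHw] using (well_founded_ind Hwf).
  intros G G' A Hsub HA; apply prov_unfold; apply prov_unfold in HA.
  revert G' Hsub; induction HA as
    [G Q Hin | G C Hin | G A B _ IH | G A B C Hin _ IHA _ IHB
    | G A w' Hww' [_ HA] | G A HA | G A C Hin _ IH | G A C Hin _ IH];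
    intros G' Hsub; pose proof (fun B => proj1 Hsub w B (rt_refl _ _ w)) as Hup_w.
  - apply s_init, Hup_w, Hin.
  - apply s_botL, Hup_w, Hin.
  - apply s_impR; apply IH, subctx_cons, Hsub.
  - apply (s_impL (A := A) (B := B)); [apply Hup_w, Hin | |].
    + apply IHA, Hsub.
    + apply IHB, subctx_cons, Hsub.
  - apply s_diaR with w'; [exact Hww' |]; exists Hww'.
    exact (IHw w' Hww' _ _ _ (subctx_succ Hsub Hww') HA).
  - apply s_boxR; intros w' Hww'; destruct (HA w' Hww') as [_ HAw']; exists Hww'.
    exact (IHw w' Hww' _ _ _ (subctx_succ Hsub Hww') HAw').
  - apply (s_diaL A); [apply Hup_w, Hin |].
    intros w' Hww' [_ HAw']; apply (IH w' Hww'); [exists Hww' | exact Hsub].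
    exact (IHw w' Hww' _ _ _ (subctx_succ_swap Hsub Hww') HAw').
  - apply (s_boxL A); [apply Hup_w, Hin |].
    intro HAll; apply IH; [intros w' Hww' | exact Hsub].
    destruct (HAll w' Hww') as [_ HAw']; exists Hww'.
    exact (IHw w' Hww' _ _ _ (subctx_succ_swap Hsub Hww') HAw').
Qed.

Lemma prov_at_weaken_incl w (G G' : ctx) (A : prop) :
  incl G G' -> agree_off w G G' -> prov_at w G A -> prov_at w G' A.
Proof.
  intros Hincl Hagr HA; apply prov_unfold; apply prov_unfold in HA.
  exact (prov_weaken (subctx_incl Hincl Hagr) HA).
Qed.

Lemma prov_agree_off w w' (G G' : ctx) (A : prop) :
  R w w' -> agree_off w G G' -> prov G A w' <-> prov G' A w'.
Proof.
  intros Hww' Hagr; split; apply prov_weaken; apply (subctx_succ_agree_off Hww').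
  - exact Hagr.
  - intros B x Hx; symmetry; exact (Hagr B x Hx).
Qed.

Lemma prov_at_hyp (A : prop) : forall w (G : ctx), In (A, w) G -> prov_at w G A.
Proof.
  induction A as [Q | | A IHA B IHB | A _ | A _]; intros w G Hin.
  - apply s_init, Hin.
  - apply s_botL, Hin.
  - apply s_impR, (s_impL (A := A) (B := B)); [right; exact Hin | |];
      [apply IHA | apply IHB]; left; reflexivity.
  - apply (s_diaL A Hin); intros w' Hww' HA; apply s_diaR with w'; assumption.
  - apply (s_boxL A Hin); intro HAll; apply s_boxR; exact HAll.
Qed.

Definition cut_admissible (A : prop) : Prop :=
  forall w G C, prov_at w G A -> prov_at w ((A, w) :: G) C -> prov_at w G C.

Definition cut_subformulas (A : prop) : Prop :=
  match A with
  | Imp B1 B2 => cut_admissible B1 /\ cut_admissible B2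
  | _ => True
  end.

Definition right_premise (A : prop) (w : W) (G : ctx) : Prop :=
  match A with
  | Imp B1 B2 => prov_at w ((B1, w) :: G) B2
  | Dia B => exists2 w', R w w' & prov G B w'
  | Box B => forall w', R w w' -> prov G B w'
  | _ => False
  end.

Lemma right_premise_cons (A : prop) w (G : ctx) (X : prop) :
  right_premise A w G -> right_premise A w ((X, w) :: G).
Proof.
  assert (Hup : forall w' B, R w w' -> prov G B w' -> prov ((X, w) :: G) B w').
  { intros w' B Hww'; refine (proj1 (prov_agree_off B Hww' _)).
    apply agree_off_consr, agree_off_refl. }
  destruct A as [| | B1 B2 | B | B]; simpl; auto.
  - apply prov_at_weaken_incl.
    + intros p [Heq | Hin]; [left | right; right]; assumption.
    + apply agree_off_consl, agree_off_consr, agree_off_consr, agree_off_refl.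
  - intros [w' Hww' HB]; exists w'; auto.
Qed.

Definition ctx_equiv (G G' : ctx) : Prop := forall p, In p G <-> In p G'.

Lemma ctx_equiv_cons (A : prop) w (X : prop) (G G0 : ctx) :
  ctx_equiv G ((A, w) :: G0) -> ctx_equiv ((X, w) :: G) ((A, w) :: (X, w) :: G0).
Proof. intros Heqv p; simpl; rewrite (Heqv p); simpl; tauto. Qed.

Lemma agree_off_of_equiv (A : prop) w (G G0 : ctx) :
  ctx_equiv G ((A, w) :: G0) -> agree_off w G G0.
Proof.
  intros Heqv B x Hx; rewrite (Heqv (B, x)); simpl.
  split; [intros [Heq | Hin]; [congruence | exact Hin] | auto].
Qed.

Lemma cut_principal (A : prop) w (G0 G : ctx) (C : prop) :
  cut_subformulas A -> right_premise A w G0 ->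
  ctx_equiv G ((A, w) :: G0) -> prov_at w G C -> prov_at w G0 C.
Proof.
  intros Hsub Hright Heqv HC; revert G0 Heqv Hright.
  induction HC as
    [G Q Hin | G C Hin | G B1 B2 _ IH | G B1 B2 C Hin _ IH1 _ IH2
    | G B w' Hww' [_ HB] | G B HB | G B C Hin _ IH | G B C Hin _ IH];
    intros G0 Heqv Hright;
    pose proof (fun w' (Hww' : R w w') X => prov_agree_off X Hww' (agree_off_of_equiv Heqv))
      as Htransfer;
    try (apply Heqv in Hin; destruct Hin as [Heq | Hin]; [injection Heq as ->|]).
  - destruct Hright.
  - apply s_init, Hin.
  - destruct Hright.
  - apply s_botL, Hin.
  - apply s_impR, IH; [apply ctx_equiv_cons, Heqv | apply right_premise_cons, Hright].
  - destruct Hsub as [Hcut1 Hcut2].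
    apply (Hcut2 w G0 C); [apply (Hcut1 w G0 B2); [apply IH1 | exact Hright] |];
      auto using ctx_equiv_cons, right_premise_cons.
  - apply (s_impL (A := B1) (B := B2) Hin); auto using ctx_equiv_cons, right_premise_cons.
  - apply s_diaR with w'; [exact Hww' |]; exists Hww'; apply (Htransfer _ Hww'); exact HB.
  - apply s_boxR; intros w' Hww'; destruct (HB w' Hww') as [_ HBw'].
    exists Hww'; apply (Htransfer _ Hww'); exact HBw'.
  - pose proof Hright as [w' Hww' HB].
    apply (IH w' Hww'); [exists Hww'; apply (Htransfer _ Hww') | |]; assumption.
  - apply (s_diaL B Hin); intros w' Hww' [_ HBw'].
    apply (IH w' Hww'); [exists Hww'; apply (Htransfer _ Hww') | |]; assumption.
  - apply IH; [intros w' Hww'; exists Hww'; apply (Htransfer _ Hww'), Hright, Hww' | |];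
      assumption.
  - apply (s_boxL B Hin); intro HAll.
    apply IH; [intros w' Hww'; destruct (HAll w' Hww') as [_ HBw']; exists Hww';
      apply (Htransfer _ Hww') | |]; assumption.
Qed.

Lemma cut_admissible_of_subformulas (A : prop) : cut_subformulas A -> cut_admissible A.
Proof.
  intros Hsub w G C HA; revert Hsub C.
  induction HA as
    [G Q Hin | G A Hin | G A B HB _ | G B1 B2 A Hin HB1 _ _ IH
    | G A w' Hww' [_ HA] | G A HA | G B A Hin _ IH | G B A Hin _ IH];
    intros Hsub C HC.
  - apply (prov_at_weaken_incl (G := (Atm Q, w) :: G)); [| |exact HC].
    + intros p [<- | Hp]; assumption.
    + apply agree_off_consl, agree_off_refl.
  - apply s_botL, Hin.
  - exact (cut_principal Hsub HB (fun _ => iff_refl _) HC).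
  - apply (s_impL Hin HB1), IH; [exact Hsub |].
    apply (prov_at_weaken_incl (G := (A, w) :: G)); [| |exact HC].
    + intros p [Hp | Hp]; [left | right; right]; assumption.
    + apply agree_off_consl, agree_off_consr, agree_off_consr, agree_off_refl.
  - refine (cut_principal Hsub _ (fun _ => iff_refl _) HC); exists w'; assumption.
  - refine (cut_principal Hsub _ (fun _ => iff_refl _) HC).
    intros w' Hww'; destruct (HA w' Hww') as [_ HAw']; exact HAw'.
  - apply (s_diaL B Hin); intros w' Hww' HB; exact (IH w' Hww' HB Hsub C HC).
  - apply (s_boxL B Hin); intro HAll; exact (IH HAll Hsub C HC).
Qed.

Lemma cut_admissible_all (A : prop) : cut_admissible A.
Proof.
  apply cut_admissible_of_subformulas.
  induction A as [| | B1 IH1 B2 IH2 | |]; simpl; auto.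
  split; apply cut_admissible_of_subformulas; assumption.
Qed.

End Metatheory.

Theorem theorem2 (Atom W : Type) (R : W -> W -> Prop)
  (Hwf : well_founded (fun x y => R y x)) :
  (forall (G : ctx Atom W) (w : W) (A : prop Atom),
      In (A, w) G -> sequent R Hwf G A w) /\
  (forall (G G' : ctx Atom W) (w : W) (A : prop Atom),
      subctx R w G G' -> sequent R Hwf G A w -> sequent R Hwf G' A w) /\
  (forall (G : ctx Atom W) (w : W) (A C : prop Atom),
      sequent R Hwf G A w -> sequent R Hwf ((A, w) :: G) C w -> sequent R Hwf G C w).
Proof.
  split; [| split].
  - intros G w A Hin; apply prov_unfold, prov_at_hyp, Hin.
  - intros G G' w A; apply prov_weaken.
  - intros G w A C HA HC; apply prov_unfold; apply prov_unfold in HA, HC.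
    exact (cut_admissible_all HA HC).
Qed.
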